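(* Let $\ell:\mathbb{R}\to\mathbb{R}$ be non-decreasing, convex, non-negative and continuously differentiable on $\mathbb{R}$, with $\ell'(z)>0$ for all $z\ge-\ell(0)/2$. Let $d=\sup\{z\in\mathbb{R}:\ell'(z)=0\}$, and $d=-\infty$ if $\ell'(z)>0$ for all $z$. Assume: (1) $d<-\ell(0)/2$; (2) $\ell$ is twice continuously differentiable on $(d,\infty)$; (3) $\ell''(z)>0$ on $(d,\infty)$; (4) $1/\ell'(z)$ is convex on $(d,\infty)$. Define $\psi(\theta,\rho)=\ell(\rho)-\inf_{z\in\mathbb{R}}\{\frac{1+\theta}{2}\ell(\rho-z)+\frac{1-\theta}{2}\ell(\rho+z)\}$ for $0\le\theta\le1$, $\rho\in\mathbb{R}$. Then for every $\theta\in[0,1]$, $\rho\mapsto\psi(\theta,\rho)$ is non-decreasing on $[-\ell(0)/2,\infty)$. *)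

From Stdlib Require Import Reals.
From Coquelicot Require Import Coquelicot.
Open Scope R_scope.

Definition dpt (l : R -> R) : Rbar := Lub_Rbar (fun z => Derive l z = 0).

Definition psi (l : R -> R) (theta rho : R) : Rbar :=
  Rbar_minus (Finite (l rho))
    (Glb_Rbar (fun v => exists z : R,
        v = (1 + theta) / 2 * l (rho - z) + (1 - theta) / 2 * l (rho + z))).

From Stdlib Require Import Reals Lra Psatz.
From Coquelicot Require Import Coquelicot.
Open Scope R_scope.

(* Write G(rho) for the infimum in psi, so that psi = l - G.  For theta < 1 the
   intermediate value theorem gives z >= 0 balancing the weighted slopes,
   a l'(y - z) = b l'(y + z) = c with a = (1 + theta)/2, b = (1 - theta)/2;
   convexity of 1/l' at the midpoint y yields 2c <= l'(y), and the tangents at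
   y -+ z then give G(y) - l'(y)(y - x) <= G(x) for x <= y.  Together with the
   tangent l(y) >= l(x) + l'(x)(y - x) this bounds the increments of psi below by
   -(l'(y) - l'(x))(y - x), an error that disappears when summed over finer and
   finer partitions.  For theta = 1, G is constant and psi inherits the
   monotonicity of l. *)

Lemma derivative_le_of_right_slopes (g : R -> R) (D K : R) :
  derivable_pt_lim g 0 D -> (forall t, 0 < t <= 1 -> g t - g 0 <= t * K) -> D <= K.
Proof.
  intros Hg Hslope.
  destruct (Rle_or_lt D K) as [ok|bad]; [exact ok|exfalso].
  destruct (Hg (D - K) ltac:(lra)) as [del Hdel].
  pose proof (cond_pos del) as Hdel0.
  set (t := Rmin 1 (del / 2)).
  assert (Ht : 0 < t <= 1) by (unfold t; split; [apply Rmin_glb_lt|apply Rmin_l]; lra).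
  assert (Htdel : Rabs t < del)
    by (rewrite Rabs_pos_eq by lra; pose proof (Rmin_r 1 (del / 2)); unfold t in *; lra).
  specialize (Hdel t ltac:(lra) Htdel). rewrite Rplus_0_l in Hdel.
  pose proof (Hslope t Ht) as Hs.
  assert (Hq : (g t - g 0) / t <= K).
  { apply Rmult_le_reg_r with t; [lra|]. unfold Rdiv. rewrite Rmult_assoc, Rinv_l by lra. lra. }
  pose proof (Rabs_def2 _ _ Hdel). lra.
Qed.

Section ConvexDifferentiable.

Variable l : R -> R.
Hypothesis l_convex : forall x y t : R, 0 <= t <= 1 ->
  l (t * x + (1 - t) * y) <= t * l x + (1 - t) * l y.
Hypothesis l_derivable : forall x : R, ex_derive l x.

Lemma convex_tangent_le (w x : R) : l w + Derive l w * (x - w) <= l x.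
Proof.
  set (g := fun t => l (w + t * (x - w))).
  assert (Hg : is_derive g 0 (Derive l w * (x - w))).
  { unfold g. auto_derive.
    - rewrite Rmult_0_l, Rplus_0_r. apply l_derivable.
    - rewrite Rmult_0_l, Rplus_0_r, Rmult_1_l. apply Rmult_comm. }
  cut (Derive l w * (x - w) <= l x - l w); [lra|].
  apply (derivative_le_of_right_slopes g); [now apply is_derive_Reals|].
  intros t Ht. unfold g.
  pose proof (l_convex x w t ltac:(lra)) as Hc.
  replace (t * x + (1 - t) * w) with (w + t * (x - w)) in Hc by ring.
  replace (w + 0 * (x - w)) with w by ring. replace (w + 1 * (x - w)) with x by ring.
  nra.
Qed.

Lemma Derive_nondecreasing (x y : R) : x <= y -> Derive l x <= Derive l y.
Proof.
  intros Hxy.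
  destruct (Req_dec x y) as [<-|Hne]; [lra|].
  pose proof (convex_tangent_le x y). pose proof (convex_tangent_le y x).
  apply Rmult_le_reg_r with (y - x); nra.
Qed.

Lemma dpt_le_of_Derive_pos (w : R) : 0 < Derive l w -> Rbar_le (dpt l) (Finite w).
Proof.
  intros Hw. apply (proj2 (Lub_Rbar_correct _)).
  intros t Ht. simpl. destruct (Rle_or_lt t w) as [ok|bad]; [exact ok|].
  pose proof (Derive_nondecreasing w t (Rlt_le _ _ bad)). lra.
Qed.

Hypothesis Derive_continuous : forall x : R, continuous (Derive l) x.

Lemma dpt_lt_of_Derive_pos (u : R) : 0 < Derive l u -> Rbar_lt (dpt l) (Finite u).
Proof.
  intros Hu.
  assert (Hc : continuity_pt (Derive l) u) by apply continuity_pt_filterlim, Derive_continuous.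
  destruct (Hc (Derive l u) Hu) as [alp [Halp Hnear]].
  assert (Hw : 0 < Derive l (u - alp / 2)).
  { assert (Hdist : R_dist (Derive l (u - alp / 2)) (Derive l u) < Derive l u).
    { apply Hnear. split; [split; [exact I|lra]|].
      simpl; unfold R_dist. replace (u - alp / 2 - u) with (- (alp / 2)) by ring.
      rewrite Rabs_Ropp, Rabs_pos_eq; lra. }
    simpl in Hdist; unfold R_dist in Hdist. pose proof (Rabs_def2 _ _ Hdist). lra. }
  apply Rbar_le_lt_trans with (Finite (u - alp / 2)); [|simpl; lra].
  now apply dpt_le_of_Derive_pos.
Qed.

Hypothesis l_nonneg : forall x : R, 0 <= l x.

Lemma balanced_split_exists (a b y : R) : 0 < b <= a -> 0 < Derive l y ->
  exists z, 0 <= z /\ a * Derive l (y - z) = b * Derive l (y + z).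
Proof.
  intros Hab Hy.
  set (h := fun z => b * Derive l (y + z) - a * Derive l (y - z)).
  assert (Hh : continuity h).
  { assert (Hc : continuity (Derive l))
      by (intro x; apply continuity_pt_filterlim, Derive_continuous).
    apply (continuity_minus (fun z => b * Derive l (y + z)) (fun z => a * Derive l (y - z)));
      [apply (continuity_scal (fun z => Derive l (y + z)))|
       apply (continuity_scal (fun z => Derive l (y - z)))];
      apply (continuity_comp _ (Derive l)); try exact Hc; intro x; reg. }
  (* Since l >= 0, the tangent at y - Z evaluated at 0 gives l'(y - Z) <= l 0 / (Z - y). *)
  set (Z := Rabs y + 1 + a * l 0 / (b * Derive l y)).
  assert (HbDy : 0 < b * Derive l y) by nra.
  assert (HZ : b * Derive l y * (Z - y) = b * Derive l y * (Rabs y - y + 1) + a * l 0)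
    by (unfold Z; field; lra).
  assert (HZpos : y < Z /\ 0 < Z).
  { assert (0 <= a * l 0 / (b * Derive l y)) by (pose proof (l_nonneg 0); apply Rdiv_le_0_compat; nra).
    pose proof (Rle_abs y). pose proof (Rabs_pos y). unfold Z. lra. }
  assert (HhZ : 0 < h Z).
  { pose proof (convex_tangent_le (y - Z) 0). pose proof (l_nonneg (y - Z)).
    pose proof (Derive_nondecreasing y (y + Z) ltac:(lra)).
    assert (a * l 0 < b * Derive l y * (Z - y)) by (pose proof (Rle_abs y); nra).
    assert (a * Derive l (y - Z) < b * Derive l y)
      by (apply Rmult_lt_reg_r with (Z - y); nra).
    unfold h. nra. }
  assert (Hh0 : h 0 <= 0) by (unfold h; rewrite Rplus_0_r, Rminus_0_r; nra).
  destruct (Req_dec (h 0) 0) as [E|N].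
  - exists 0. split; [lra|]. unfold h in E. lra.
  - destruct (IVT h 0 Z Hh ltac:(lra) ltac:(lra) HhZ) as [z [Hz Hhz]].
    exists z. split; [lra|]. unfold h in Hhz. lra.
Qed.

End ConvexDifferentiable.

Definition split_cost (l : R -> R) (theta rho z : R) : R :=
  (1 + theta) / 2 * l (rho - z) + (1 - theta) / 2 * l (rho + z).

Definition split_values (l : R -> R) (theta rho : R) : R -> Prop :=
  fun v => exists z : R, v = split_cost l theta rho z.

Definition split_inf (l : R -> R) (theta rho : R) : R :=
  real (Glb_Rbar (split_values l theta rho)).

Section SplitInfimum.

Variables (l : R -> R) (theta : R).
Hypothesis l_nonneg : forall x : R, 0 <= l x.
Hypothesis theta_range : 0 <= theta <= 1.

Lemma Glb_split_values (rho : R) :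
  Glb_Rbar (split_values l theta rho) = Finite (split_inf l theta rho).
Proof.
  unfold split_inf.
  destruct (Glb_Rbar_correct (split_values l theta rho)) as [Hlb Hglb].
  assert (Hpos : Rbar_le (Finite 0) (Glb_Rbar (split_values l theta rho))).
  { apply Hglb. intros v [z ->]. unfold split_cost. simpl.
    pose proof (l_nonneg (rho - z)). pose proof (l_nonneg (rho + z)). nra. }
  pose proof (Hlb _ (ex_intro _ 0 eq_refl)) as Hle.
  destruct (Glb_Rbar (split_values l theta rho)); simpl in *; easy.
Qed.

Lemma split_inf_le_cost (rho z : R) : split_inf l theta rho <= split_cost l theta rho z.
Proof.
  pose proof (proj1 (Glb_Rbar_correct (split_values l theta rho))) as Hlb.
  rewrite Glb_split_values in Hlb. exact (Hlb _ (ex_intro _ z eq_refl)).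
Qed.

Lemma le_split_inf (rho m : R) :
  (forall z, m <= split_cost l theta rho z) -> m <= split_inf l theta rho.
Proof.
  intros Hm.
  pose proof (proj2 (Glb_Rbar_correct (split_values l theta rho)) (Finite m)) as Hglb.
  rewrite Glb_split_values in Hglb. apply Hglb. intros v [z ->]. exact (Hm z).
Qed.

Lemma psi_split_inf (rho : R) : psi l theta rho = Finite (l rho - split_inf l theta rho).
Proof.
  pose proof (Glb_split_values rho) as E.
  unfold split_values, split_cost in E. unfold psi. now rewrite E.
Qed.

End SplitInfimum.

Section BalancedSplit.

Variable l : R -> R.
Hypothesis l_convex : forall x y t : R, 0 <= t <= 1 ->
  l (t * x + (1 - t) * y) <= t * l x + (1 - t) * l y.
Hypothesis l_derivable : forall x : R, ex_derive l x.
Hypothesis Derive_continuous : forall x : R, continuous (Derive l) x.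
Hypothesis l_nonneg : forall x : R, 0 <= l x.
Hypothesis inv_Derive_convex : forall x y t : R,
  Rbar_lt (dpt l) (Finite x) -> Rbar_lt (dpt l) (Finite y) -> 0 <= t <= 1 ->
  / Derive l (t * x + (1 - t) * y) <= t * / Derive l x + (1 - t) * / Derive l y.

Lemma balanced_Derive_le_midpoint (a b u w : R) :
  0 < a -> 0 < b -> a + b = 1 -> u <= w -> a * Derive l u = b * Derive l w -> 0 < Derive l w ->
  2 * (b * Derive l w) <= Derive l ((u + w) / 2).
Proof.
  intros Ha Hb Hab Huw Hbal Hw.
  set (c := b * Derive l w) in *.
  assert (Hc : 0 < c) by (unfold c; nra).
  assert (Hu : 0 < Derive l u) by (destruct (Rle_or_lt (Derive l u) 0); [nra|assumption]).
  assert (Hm : 0 < Derive l ((u + w) / 2))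
    by (pose proof (Derive_nondecreasing l l_convex l_derivable u ((u + w) / 2)); lra).
  pose proof (inv_Derive_convex u w (1 / 2)
    (dpt_lt_of_Derive_pos l l_convex l_derivable Derive_continuous u Hu)
    (dpt_lt_of_Derive_pos l l_convex l_derivable Derive_continuous w Hw) ltac:(lra)) as Hinv.
  replace (1 / 2 * u + (1 - 1 / 2) * w) with ((u + w) / 2) in Hinv by field.
  assert (Eu : / Derive l u = a / c) by (rewrite <- Hbal; field; lra).
  assert (Ew : / Derive l w = b / c) by (unfold c; field; lra).
  rewrite Eu, Ew in Hinv.
  replace (1 / 2 * (a / c) + (1 - 1 / 2) * (b / c)) with (/ (2 * c)) in Hinv
    by (replace b with (1 - a) by lra; field; lra).
  apply Rinv_le_contravar in Hinv; [|now apply Rinv_0_lt_compat].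
  now rewrite !Rinv_inv in Hinv.
Qed.

Lemma split_inf_increment (theta x y : R) : 0 <= theta < 1 -> x <= y -> 0 < Derive l y ->
  split_inf l theta y - Derive l y * (y - x) <= split_inf l theta x.
Proof.
  intros Hth Hxy Hy.
  set (a := (1 + theta) / 2). set (b := (1 - theta) / 2).
  destruct (balanced_split_exists l l_convex l_derivable Derive_continuous l_nonneg a b y
    ltac:(unfold a, b; lra) Hy) as [z0 [Hz0 Hbal]].
  pose proof (split_inf_le_cost l theta l_nonneg ltac:(lra) y z0) as Hinf.
  unfold split_cost in Hinf. fold a b in Hinf.
  set (u := y - z0) in *. set (w := y + z0) in *.
  assert (Hw : 0 < Derive l w)
    by (pose proof (Derive_nondecreasing l l_convex l_derivable y w ltac:(unfold w; lra)); lra).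
  pose proof (balanced_Derive_le_midpoint a b u w ltac:(unfold a; lra) ltac:(unfold b; lra)
    ltac:(unfold a, b; field) ltac:(unfold u, w; lra) Hbal Hw) as Hmid.
  replace ((u + w) / 2) with y in Hmid by (unfold u, w; field).
  apply (le_split_inf l theta l_nonneg ltac:(lra)). intro z.
  (* Tangents at the balanced points u, w: the slopes a l'(u) = b l'(w) make the z-terms cancel. *)
  pose proof (convex_tangent_le l l_convex l_derivable u (x - z)) as Tu.
  pose proof (convex_tangent_le l l_convex l_derivable w (x + z)) as Tw.
  assert (Hcancel : a * (Derive l u * (x - z - u)) + b * (Derive l w * (x + z - w))
                    = 2 * (b * Derive l w) * (x - y))
    by (rewrite <- Rmult_assoc, Hbal; unfold u, w; ring).
  assert (Ta : a * (l u + Derive l u * (x - z - u)) <= a * l (x - z))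
    by (apply Rmult_le_compat_l; [unfold a|]; lra).
  assert (Tb : b * (l w + Derive l w * (x + z - w)) <= b * l (x + z))
    by (apply Rmult_le_compat_l; [unfold b|]; lra).
  assert (- (Derive l y * (y - x)) <= 2 * (b * Derive l w) * (x - y)) by nra.
  unfold split_cost. fold a b. lra.
Qed.

End BalancedSplit.

Lemma split_inf_full_weight_le (l : R -> R) (rho rho' : R) :
  (forall x : R, 0 <= l x) -> split_inf l 1 rho' <= split_inf l 1 rho.
Proof.
  intros l_nonneg.
  assert (Hcost : forall r z, split_cost l 1 r z = l (r - z)) by (intros; unfold split_cost; field).
  apply (le_split_inf l 1 l_nonneg ltac:(lra)). intro z.
  pose proof (split_inf_le_cost l 1 l_nonneg ltac:(lra) rho' (rho' - rho + z)) as H.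
  rewrite !Hcost in *. now replace (rho - z) with (rho' - (rho' - rho + z)) by ring.
Qed.

Lemma nondecreasing_of_increment_bound (F g : R -> R) (a : R) :
  (forall x y, a <= x -> x <= y -> - ((g y - g x) * (y - x)) <= F y - F x) ->
  forall x y, a <= x -> x <= y -> F x <= F y.
Proof.
  intros Hstep x y Hx Hxy.
  (* Telescoping over n equal steps of length del makes the error del * (g y - g x). *)
  assert (Htel : forall (del : R) (k : nat), 0 <= del ->
            - (del * (g (x + INR k * del) - g x)) <= F (x + INR k * del) - F x).
  { intros del k Hdel. induction k as [|k IH].
    - simpl. rewrite Rmult_0_l, Rplus_0_r. lra.
    - rewrite S_INR. pose proof (pos_INR k).
      pose proof (Hstep (x + INR k * del) (x + (INR k + 1) * del) ltac:(nra) ltac:(nra)).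
      replace (x + (INR k + 1) * del - (x + INR k * del)) with del in * by ring.
      lra. }
  set (K := Rabs ((y - x) * (g y - g x)) + 1).
  assert (HK : 0 < K) by (pose proof (Rabs_pos ((y - x) * (g y - g x))); unfold K; lra).
  apply Rle_plus_epsilon. intros eps Heps.
  destruct (archimed_cor1 (eps / K) ltac:(now apply Rdiv_lt_0_compat)) as [n [Hn Hn0]].
  apply lt_0_INR in Hn0.
  pose proof (Htel ((y - x) / INR n) n ltac:(apply Rdiv_le_0_compat; lra)) as Hn1.
  replace (x + INR n * ((y - x) / INR n)) with y in Hn1 by (field; lra).
  replace ((y - x) / INR n * (g y - g x)) with ((y - x) * (g y - g x) * / INR n) in Hn1
    by (field; lra).
  assert (Hsmall : K * / INR n < eps).
  { apply Rmult_lt_compat_l with (r := K) in Hn; [|exact HK].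
    now replace (K * (eps / K)) with eps in Hn by (field; lra). }
  assert ((y - x) * (g y - g x) * / INR n <= K * / INR n).
  { apply Rmult_le_compat_r; [left; now apply Rinv_0_lt_compat|].
    pose proof (Rle_abs ((y - x) * (g y - g x))). unfold K. lra. }
  lra.
Qed.

Theorem lemma6 (l : R -> R)
  (Hmono : forall x y : R, x <= y -> l x <= l y)
  (Hconv : forall (x y t : R), 0 <= t <= 1 ->
      l (t * x + (1 - t) * y) <= t * l x + (1 - t) * l y)
  (Hnonneg : forall x : R, 0 <= l x)
  (HC1 : forall x : R, ex_derive l x /\ continuous (Derive l) x)
  (Hpos : forall z : R, - l 0 / 2 <= z -> 0 < Derive l z)
  (Hd : Rbar_lt (dpt l) (Finite (- l 0 / 2)))
  (HC2 : forall z : R, Rbar_lt (dpt l) (Finite z) ->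
      ex_derive (Derive l) z /\ continuous (Derive (Derive l)) z)
  (Hsecond : forall z : R, Rbar_lt (dpt l) (Finite z) -> 0 < Derive (Derive l) z)
  (Hinvconv : forall (x y t : R), Rbar_lt (dpt l) (Finite x) -> Rbar_lt (dpt l) (Finite y) ->
      0 <= t <= 1 ->
      / Derive l (t * x + (1 - t) * y) <= t * / Derive l x + (1 - t) * / Derive l y) :
  forall theta : R, 0 <= theta <= 1 ->
  forall rho1 rho2 : R, - l 0 / 2 <= rho1 -> rho1 <= rho2 ->
    Rbar_le (psi l theta rho1) (psi l theta rho2).
Proof.
  intros theta Hth rho1 rho2 Hrho1 Hrho12.
  assert (l_derivable : forall x, ex_derive l x) by (intro x; apply HC1).
  assert (Derive_continuous : forall x, continuous (Derive l) x) by (intro x; apply HC1).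
  rewrite !(psi_split_inf l theta Hnonneg Hth). simpl.
  destruct (Req_dec theta 1) as [->|Hth1].
  - pose proof (Hmono rho1 rho2 Hrho12).
    pose proof (split_inf_full_weight_le l rho1 rho2 Hnonneg). lra.
  - apply (nondecreasing_of_increment_bound (fun r => l r - split_inf l theta r) (Derive l)
      (- l 0 / 2)); [|assumption..].
    intros x y Hx Hxy.
    pose proof (split_inf_increment l Hconv l_derivable Derive_continuous Hnonneg Hinvconv
      theta x y ltac:(lra) Hxy (Hpos y ltac:(lra))).
    pose proof (convex_tangent_le l Hconv l_derivable x y).
    lra.
Qed.
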